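(* Every map in $\mathbb{J}$ is both an $\mathbb{I}$-cofibration and a weak equivalence (i.e. lies in $\mathbb{W}$).
   Context: $p\mathsf{Ch}^*_\mathbb{Q}=\mathsf{Fun}([0,\infty),\mathsf{Ch}^*_\mathbb{Q})$, non-negatively graded rational cochain complexes. $S^k=\mathbb{Q}$ in degree $k$; $D^k$ ($k\ge1$) is $\mathbb{Q}$ in degrees $k-1,k$ with identity differential; $D^0=0$. For $0\le s<t<\infty$, $\mathbb{S}^k_{[s,t)}$ is $0$ at $r<s$, $S^k$ at $s\le r<t$, $D^k$ at $r\ge t$; $\mathbb{S}^k_{[s,\infty)}$ is $0$ at $r<s$, $S^k$ at $r\ge s$; $\mathbb{D}^k_s$ is $0$ at $r<s$, $D^k$ at $r\ge s$. $\mathbb{I}=\{\mathbb{S}^k_{[s,t)}\to\mathbb{D}^k_s: k\in\mathbb{N},\ 0\le s<t\le\infty\}$, $\mathbb{J}=\{\mathbb{D}^k_t\to\mathbb{D}^k_s: 0\le s<t<\infty\}\cup\{0\to\mathbb{D}^k_s\}$. An $\mathbb{I}$-cofibration is a map having the left lifting property with respect to every map that has the right lifting property with respect to all maps in $\mathbb{I}$. $\mathbb{W}$ is the class of maps that are quasi-isomorphisms at each $r\in[0,\infty)$. *)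

From HB Require Import structures.
From mathcomp Require Import all_boot all_order all_algebra.
From mathcomp Require Import reals.
Set Implicit Arguments. Unset Strict Implicit. Unset Printing Implicit Defensive.
Import Order.TTheory GRing.Theory Num.Theory.
Local Open Scope ring_scope.

Section PCh.
Variable R : realType.

Definition Rnn := {r : R | 0 <= r}.

(* Raw data of a functor [0,oo) -> Ch^*_Q (non-negatively graded cochain
   complexes of Q-vector spaces): degree-wise Q-vector spaces, differentials
   d : X_r^n -> X_r^{n+1}, and structure maps X_r -> X_s (only meaningful
   for r <= s; the axioms in is_pcc only concern r <= s). *)
Record pcc := PCC {
  obj : Rnn -> nat -> lmodType rat;
  dif : forall r n, obj r n -> obj r n.+1;
  trm : forall r s n, obj r n -> obj s n }.
Arguments obj : clear implicits.
Arguments dif : clear implicits.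
Arguments trm : clear implicits.

Definition is_linear (V W : lmodType rat) (f : V -> W) : Prop :=
  forall (a : rat) (x y : V), f (a *: x + y) = a *: f x + f y.

Definition is_pcc (X : pcc) : Prop :=
  (forall r n, is_linear (dif X r n)) /\
  (forall r n x, dif X r n.+1 (dif X r n x) = 0) /\
  (forall (r s : Rnn) n, val r <= val s -> is_linear (trm X r s n)) /\
  (forall (r s : Rnn) n x, val r <= val s ->
      dif X s n (trm X r s n x) = trm X r s n.+1 (dif X r n x)) /\
  (forall r n x, trm X r r n x = x) /\
  (forall (r s u : Rnn) n x, val r <= val s -> val s <= val u ->
      trm X s u n (trm X r s n x) = trm X r u n x).

Definition hom (X Y : pcc) := forall r n, obj X r n -> obj Y r n.

Definition is_hom (X Y : pcc) (f : hom X Y) : Prop :=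
  (forall r n, is_linear (f r n)) /\
  (forall r n x, dif Y r n (f r n x) = f r n.+1 (dif X r n x)) /\
  (forall (r s : Rnn) n x, val r <= val s ->
      trm Y r s n (f r n x) = f s n (trm X r s n x)).

Definition hcomp (X Y Z : pcc) (g : hom Y Z) (f : hom X Y) : hom X Z :=
  fun r n x => g r n (f r n x).

Definition heq (X Y : pcc) (f g : hom X Y) : Prop :=
  forall r n x, f r n x = g r n x.

Definition LLP (A B : pcc) (i : hom A B) (X Y : pcc) (p : hom X Y) : Prop :=
  forall (u : hom A X) (v : hom B Y), is_hom u -> is_hom v ->
    heq (hcomp p u) (hcomp v i) ->
    exists h : hom B X, is_hom h /\ heq (hcomp h i) u /\ heq (hcomp p h) v.

Inductive stage := Zst | Sst | Dst.

(* dimension of the degree-n part of 0, S^k, D^k (D^0 = 0) *)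
Definition sdim (k : nat) (st : stage) (n : nat) : nat :=
  match st with
  | Zst => 0
  | Sst => (n == k)%N
  | Dst => ((0 < k) && ((n.+1 == k) || (n == k)))%N
  end.

(* all maps between one-dimensional pieces are the identity of Q; the
   differential of D^k is the identity Q (deg k-1) -> Q (deg k) *)
Definition mpcc (k : nat) (st : Rnn -> stage) : pcc :=
  {| obj := fun r n => ('rV[rat]_(sdim k (st r) n) : lmodType rat);
     dif := fun r n v =>
       v *m (if st r is Dst then const_mx 1 else 0 : 'M[rat]_(_, sdim k (st r) n.+1));
     trm := fun r s n v => v *m (const_mx 1 : 'M[rat]_(_, sdim k (st s) n)) |}.

Definition mhom (k : nat) (st1 st2 : Rnn -> stage) : hom (mpcc k st1) (mpcc k st2) :=
  fun r n v => v *m (const_mx 1 : 'M[rat]_(_, sdim k (st2 r) n)).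

Arguments mhom : clear implicits.
Arguments mpcc : clear implicits.

Definition st_Sint (s t : R) (r : Rnn) : stage :=
  if val r < s then Zst else if val r < t then Sst else Dst.
Definition st_Sinf (s : R) (r : Rnn) : stage :=
  if val r < s then Zst else Sst.
Definition st_D (s : R) (r : Rnn) : stage :=
  if val r < s then Zst else Dst.
Definition st_0 (r : Rnn) : stage := Zst.

Definition SSint k s t := mpcc k (st_Sint s t).
Definition SSinf k s := mpcc k (st_Sinf s).
Definition DD k s := mpcc k (st_D s).
Definition Zero k := mpcc k st_0.

Definition I_fin k s t : hom (SSint k s t) (DD k s) := mhom k _ _.
Definition I_inf k s : hom (SSinf k s) (DD k s) := mhom k _ _.
Definition J_D k s t : hom (DD k t) (DD k s) := mhom k _ _.
Definition J_0 k s : hom (Zero k) (DD k s) := mhom k _ _.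

Arguments SSint : clear implicits.
Arguments SSinf : clear implicits.
Arguments DD : clear implicits.
Arguments Zero : clear implicits.
Arguments I_fin : clear implicits.
Arguments I_inf : clear implicits.
Arguments J_D : clear implicits.
Arguments J_0 : clear implicits.

Definition RLP_I (X Y : pcc) (p : hom X Y) : Prop :=
  (forall (k : nat) (s t : R), 0 <= s -> s < t -> LLP (I_fin k s t) p) /\
  (forall (k : nat) (s : R), 0 <= s -> LLP (I_inf k s) p).

Definition I_cof (A B : pcc) (j : hom A B) : Prop :=
  forall (X Y : pcc) (p : hom X Y), is_pcc X -> is_pcc Y -> is_hom p ->
    RLP_I p -> LLP j p.

Definition cocycle (X : pcc) r n (x : obj X r n) : Prop := dif X r n x = 0.
Definition coboundary (X : pcc) r : forall n, obj X r n -> Prop :=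
  fun n => match n return obj X r n -> Prop with
           | 0%N => fun x => x = 0
           | m.+1 => fun x => exists y, dif X r m y = x
           end.

(* H^n(f_r) is injective and surjective, written out *)
Definition quasi_iso_at (X Y : pcc) (f : hom X Y) (r : Rnn) : Prop :=
  forall n,
    (forall x : obj X r n, cocycle x -> coboundary (f r n x) -> coboundary x) /\
    (forall y : obj Y r n, cocycle y ->
       exists x : obj X r n, cocycle x /\ coboundary (f r n x - y)).

Definition inW (X Y : pcc) (f : hom X Y) : Prop := forall r, quasi_iso_at f r.

End PCh.

From Pilot Require Import Defs.
From HB Require Import structures.
From mathcomp Require Import all_boot all_order all_algebra.
From mathcomp Require Import reals.
Import Order.TTheory GRing.Theory Num.Theory.
Local Open Scope ring_scope.
Set Implicit Arguments. Unset Strict Implicit. Unset Printing Implicit Defensive.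

(* Every degree of a model object [mpcc k st] is 0 or Q, so a map out of it is determined
   by the images of its cells, and maps correspond to families of elements of the target
   compatible with differentials and structure maps; lifting problems become problems
   about such families.  For k >= 1 the J-map D^k_t -> D^k_s (t = oo giving 0 -> D^k_s)
   is handled by attaching two spheres: lifting against S^(k+1)_[s,t) -> D^(k+1)_s gives a
   compatible family of cocycles over [s,oo) lifting the top cell of the target and
   extending the given top cell over [t,oo); lifting against S^k_[s,t) -> D^k_s then
   supplies the bottom cell.  For k = 0 everything is 0, as D^0 = 0.  All objects
   involved are pointwise 0 or a disk, hence acyclic, so J-maps are quasi-isomorphisms. *)

Lemma is_linear0 (V W : lmodType rat) (f : V -> W) : is_linear f -> f 0 = 0.
Proof.
move=> lin_f; have := lin_f 1 0 0; rewrite scale1r !addr0 scale1r => f0D.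
by apply: (addrI (f 0)); rewrite addr0 -f0D.
Qed.

Lemma is_linearZ (V W : lmodType rat) (f : V -> W) a x :
  is_linear f -> f (a *: x) = a *: f x.
Proof. by move=> lin_f; rewrite -[a *: x]addr0 lin_f is_linear0 // addr0. Qed.

Definition rowsum d (w : 'rV[rat]_d) : rat := \sum_i w 0 i.

Lemma rowsum_const d c : rowsum (const_mx c : 'rV_d) = c *+ d.
Proof. by rewrite /rowsum (eq_bigr (fun=> c)) ?sumr_const ?card_ord // => i _; rewrite mxE. Qed.

Lemma rowsumDZ d a (x y : 'rV[rat]_d) : rowsum (a *: x + y) = a * rowsum x + rowsum y.
Proof. by rewrite /rowsum mulr_sumr -big_split; apply: eq_bigr => i _; rewrite !mxE. Qed.

Lemma row_dim0 d (w : 'rV[rat]_d) : d = 0%N -> w = 0.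
Proof. by move=> d0; subst d; apply/matrixP => i []. Qed.

Lemma rowsum_dim0 d (w : 'rV[rat]_d) : d = 0%N -> rowsum w = 0.
Proof. by move=> d0; subst d; rewrite /rowsum big_ord0. Qed.

Lemma rowsum0 d : rowsum (0 : 'rV[rat]_d) = 0.
Proof. by rewrite /rowsum big1 // => i _; rewrite mxE. Qed.

Lemma rowsumZ d a (w : 'rV[rat]_d) : rowsum (a *: w) = a * rowsum w.
Proof. by rewrite -[a *: w]addr0 rowsumDZ rowsum0 addr0. Qed.

Lemma row_le1E d (w : 'rV[rat]_d) : (d <= 1)%N -> w = rowsum w *: const_mx 1.
Proof.
case: d w => [|[|//]] w _; first by apply/matrixP => i [].
by apply/matrixP => i j; rewrite (ord1 i) (ord1 j) !mxE /rowsum big_ord1 mulr1.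
Qed.

Lemma row_le1_inj d (w1 w2 : 'rV[rat]_d) :
  (d <= 1)%N -> rowsum w1 = rowsum w2 -> w1 = w2.
Proof. by move=> d_le1 eq12; rewrite (row_le1E w1 d_le1) (row_le1E w2 d_le1) eq12. Qed.

Lemma mulmx_const1 d e (w : 'rV[rat]_d) :
  w *m (const_mx 1 : 'M_(d, e)) = rowsum w *: const_mx 1.
Proof.
apply/matrixP => i j; rewrite !mxE (ord1 i) mulr1.
by apply: eq_bigr => l _; rewrite mxE mulr1.
Qed.

Lemma rowsum_mulmx_const1 d e (w : 'rV[rat]_d) :
  rowsum (w *m (const_mx 1 : 'M_(d, e))) = rowsum w *+ e.
Proof.
rewrite mulmx_const1 {1}/rowsum (eq_bigr (fun=> rowsum w)) ?sumr_const ?card_ord //.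
by move=> i _; rewrite !mxE mulr1.
Qed.

Definition stage_rank (c : stage) : nat :=
  match c with Zst => 0 | Sst => 1 | Dst => 2 end.

Lemma sdim0_nSst c n : c <> Sst -> sdim 0 c n = 0%N.
Proof. by case: c. Qed.

Lemma sdim_le1 k c n : (sdim k c n <= 1)%N.
Proof. by case: c => //=; rewrite leq_b1. Qed.

Lemma sdim_rank k c c' n :
  (stage_rank c <= stage_rank c')%N -> (sdim k.+1 c n <= sdim k.+1 c' n)%N.
Proof. by case: c; case: c' => //= _; case: (n == k.+1); rewrite ?orbT ?leq_b1. Qed.

Lemma sdim_live k c n :
  sdim k.+1 c n != 0%N -> c = Dst /\ n = k \/ c <> Zst /\ n = k.+1.
Proof.
case: c => //=; rewrite ?eqSS; [|case: (n =P k) => [-> _|_]; first by left];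
  case: (n =P k.+1) => [-> _|_] //; by right.
Qed.

Lemma sdim_Dlo k : sdim k.+1 Dst k = 1%N.
Proof. by rewrite /= eqxx. Qed.

Lemma sdim_hi k c : c <> Zst -> sdim k.+1 c k.+1 = 1%N.
Proof. by case: c => //= _; rewrite eqxx ?orbT. Qed.

Lemma sdim_top k c : sdim k.+1 c k.+2 = 0%N.
Proof. by case: c => //=; rewrite !eqSS; elim: k. Qed.

Section Stages.
Variable R : realType.

Definition monotone_stage (st : Rnn R -> stage) : Prop :=
  forall r r' : Rnn R, val r <= val r' -> (stage_rank (st r) <= stage_rank (st r'))%N.

Lemma monotone_Dst st (r r' : Rnn R) :
  monotone_stage st -> val r <= val r' -> st r = Dst -> st r' = Dst.
Proof. by move=> mono le_rr' str; have := mono _ _ le_rr'; rewrite str; case: (st r'). Qed.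

Lemma monotone_nZst st (r r' : Rnn R) :
  monotone_stage st -> val r <= val r' -> st r <> Zst -> st r' <> Zst.
Proof. by move=> mono le_rr'; have := mono _ _ le_rr'; case: (st r); case: (st r'). Qed.

Lemma monotone_st_Sint s t : monotone_stage (st_Sint s t).
Proof.
move=> r r' le_rr'; have lt_r a : val r' < a -> val r < a := le_lt_trans le_rr'.
rewrite /st_Sint; case: (ltP (val r') s) => [/lt_r -> //| _].
case: (ltP (val r') t) => [/lt_r -> | _]; first by case: ifP.
by case: ifP => //; case: ifP.
Qed.

Lemma monotone_st_Sinf s : monotone_stage (st_Sinf s).
Proof.
move=> r r' le_rr'; rewrite /st_Sinf; case: (ltP (val r') s) => [lt_r's | _].
  by rewrite (le_lt_trans le_rr' lt_r's).
by case: ifP.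
Qed.

Lemma monotone_st_D s : monotone_stage (st_D s).
Proof.
move=> r r' le_rr'; rewrite /st_D; case: (ltP (val r') s) => [lt_r's | _].
  by rewrite (le_lt_trans le_rr' lt_r's).
by case: ifP.
Qed.

Lemma st_D_nSst (s : R) r : st_D s r <> Sst.
Proof. by rewrite /st_D; case: ifP. Qed.

Lemma st_Sint_Zst (s t : R) r : st_Sint s t r = Zst <-> val r < s.
Proof. by rewrite /st_Sint; case: ifP => // _; case: ifP. Qed.

Lemma st_Sinf_Zst (s : R) r : st_Sinf s r = Zst <-> val r < s.
Proof. by rewrite /st_Sinf; case: ifP. Qed.

Lemma st_D_Sint (s t : R) r : s < t -> st_D t r = if st_Sint s t r is Dst then Dst else Zst.
Proof.
move=> lt_st; rewrite /st_D /st_Sint; case: (ltP (val r) t) => [lt_rt | le_tr].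
  by case: ifP.
by rewrite ltNge (le_trans (ltW lt_st) le_tr).
Qed.

End Stages.

Section PccFacts.
Variables (R : realType) (X : pcc R).
Hypothesis pX : is_pcc X.

Lemma dif0 r n : dif (0 : obj X r n) = 0.
Proof. by case: pX => dif_lin _; apply: is_linear0. Qed.

Lemma difZ r n a (x : obj X r n) : dif (a *: x) = a *: dif x.
Proof. by case: pX => dif_lin _; apply: is_linearZ. Qed.

Lemma difK r n (x : obj X r n) : dif (dif x) = 0.
Proof. by case: pX => _ []. Qed.

Lemma trm0 (r r' : Rnn R) n : val r <= val r' -> trm r' (0 : obj X r n) = 0.
Proof. by case: pX => _ [_ [trm_lin _]] le_rr'; apply/is_linear0/trm_lin. Qed.

Lemma trmZ (r r' : Rnn R) n a (x : obj X r n) :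
  val r <= val r' -> trm r' (a *: x) = a *: trm r' x.
Proof. by case: pX => _ [_ [trm_lin _]] le_rr'; apply/is_linearZ/trm_lin. Qed.

End PccFacts.

Definition cellmap (R : realType) k (st : Rnn R -> stage) (X : pcc R)
    (E : forall r n, obj X r n) : Defs.hom (mpcc k st) X :=
  fun r n w => rowsum w *: E r n.
Arguments cellmap {R} k st {X} E [r n] w.

Lemma rowsum_mpcc_dif (R : realType) k (st : Rnn R -> stage) r n
    (w : obj (mpcc k st) r n) :
  rowsum (dif w) = if st r is Dst then rowsum w *+ sdim k (st r) n.+1 else 0.
Proof.
by move: w => /=; case: (st r) => w; rewrite ?rowsum_mulmx_const1 // mulmx0 rowsum0.
Qed.

Section Cells.
Variable R : realType.
Implicit Types (X Y : pcc R) (st : Rnn R -> stage).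

Definition linear_hom X Y (f : Defs.hom X Y) : Prop := forall r n, is_linear (f r n).

Definition hmap X Y (p : Defs.hom X Y) (E : forall r n, obj X r n) : forall r n, obj Y r n :=
  fun r n => p r n (E r n).

(* [const_mx 1] spans every nonzero degree of [mpcc k st]. *)
Definition cells_of k st X (f : Defs.hom (mpcc k st) X) : forall r n, obj X r n :=
  fun r n => f r n (const_mx 1).

Definition agree_on k st X (E F : forall r n, obj X r n) : Prop :=
  forall r n, sdim k (st r) n != 0%N -> E r n = F r n.

Lemma is_hom_linear X Y (f : Defs.hom X Y) : is_hom f -> linear_hom f.
Proof. by case. Qed.

Lemma is_hom0 X Y (f : Defs.hom X Y) r n : is_hom f -> f r n 0 = 0.
Proof. by case=> lin_f _; apply: is_linear0. Qed.

Lemma linear_hcomp X Y Z (g : Defs.hom Y Z) (f : Defs.hom X Y) :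
  linear_hom g -> linear_hom f -> linear_hom (hcomp g f).
Proof. by move=> lin_g lin_f r n a x y; rewrite /hcomp lin_f lin_g. Qed.

Lemma linear_cellmap k st X (E : forall r n, obj X r n) : linear_hom (cellmap k st E).
Proof. by move=> r n a x y; rewrite /cellmap rowsumDZ scalerDl scalerA. Qed.

Lemma linear_mhom k st1 st2 : linear_hom (@mhom R k st1 st2).
Proof. by move=> r n a x y; rewrite /mhom mulmxDl scalemxAl. Qed.

Lemma linear_cellsE k st X (f : Defs.hom (mpcc k st) X) r n (w : obj (mpcc k st) r n) :
  linear_hom f -> f r n w = rowsum w *: cells_of f r n.
Proof. by move=> lin_f; rewrite {1}(row_le1E w (sdim_le1 _ _ _)) (is_linearZ _ _ (lin_f r n)). Qed.

Lemma heq_cellsP k st X (f g : Defs.hom (mpcc k st) X) :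
  linear_hom f -> linear_hom g -> heq f g <-> agree_on k st (cells_of f) (cells_of g).
Proof.
move=> lin_f lin_g; split=> [fg r n _ | fg r n w]; first exact: fg.
rewrite !linear_cellsE //; have [d0 | live] := eqVneq (sdim k (st r) n) 0%N.
  by rewrite rowsum_dim0 // !scale0r.
by rewrite fg.
Qed.

Lemma cells_of_dead k st X (f : Defs.hom (mpcc k st) X) r n :
  linear_hom f -> sdim k (st r) n = 0%N -> cells_of f r n = 0.
Proof.
move=> lin_f d0; rewrite /cells_of.
have -> : (const_mx 1 : obj (mpcc k st) r n) = 0 by exact: row_dim0.
exact: is_linear0.
Qed.

Lemma cells_of_cellmap k st X (E : forall r n, obj X r n) :
  agree_on k st (cells_of (cellmap k st E)) E.
Proof.
move=> r n live; rewrite /cells_of /cellmap rowsum_const.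
by move: live; case: (sdim _ _ _) (sdim_le1 k (st r) n) => [|[|]] //; rewrite scale1r.
Qed.

Lemma cells_of_hcomp_mhom k st1 st2 X (h : Defs.hom (mpcc k st2) X) :
  linear_hom h -> agree_on k st1 (cells_of (hcomp h (@mhom R k st1 st2))) (cells_of h).
Proof.
move=> lin_h r n live; rewrite /cells_of /hcomp /mhom mulmx_const1 rowsum_const.
rewrite (is_linearZ _ _ (lin_h r n)).
by move: live; case: (sdim _ _ _) (sdim_le1 k (st1 r) n) => [|[|]] //; rewrite scale1r.
Qed.

Lemma agree_on_sym k st X (E F : forall r n, obj X r n) :
  agree_on k st E F -> agree_on k st F E.
Proof. by move=> EF r n live; rewrite EF. Qed.

Lemma agree_on_trans k st X (E F G : forall r n, obj X r n) :
  agree_on k st E F -> agree_on k st F G -> agree_on k st E G.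
Proof. by move=> EF FG r n live; rewrite EF ?FG. Qed.

Lemma agree_on_hmap k st X Y (p : Defs.hom X Y) (E F : forall r n, obj X r n) :
  agree_on k st E F -> agree_on k st (hmap p E) (hmap p F).
Proof. by move=> EF r n live; rewrite /hmap EF. Qed.

Lemma agree_on_sub k st1 st2 X (E F : forall r n, obj X r n) :
  (forall r n, sdim k (st1 r) n <= sdim k (st2 r) n)%N ->
  agree_on k st2 E F -> agree_on k st1 E F.
Proof.
move=> le12 EF r n live; apply: EF; apply: contraNneq live => d0.
by rewrite -leqn0 -d0 le12.
Qed.

End Cells.

Section CellFamilies.
Variable R : realType.
Implicit Types (X : pcc R) (st : Rnn R -> stage).

(* The cells of D^(k+1) sit in degrees k and k+1, that of S^(k+1) in degree k+1. *)
Definition is_cell_family k st X (E : forall r n, obj X r n) : Prop :=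
  [/\ forall r, st r = Dst -> dif (E r k) = E r k.+1,
      forall r, st r = Sst -> dif (E r k.+1) = 0,
      forall r r' : Rnn R, val r <= val r' -> st r = Dst -> trm r' (E r k) = E r' k
    & forall r r' : Rnn R, val r <= val r' -> st r <> Zst ->
        trm r' (E r k.+1) = E r' k.+1].

Lemma agree_on_cells k st X (E F : forall r n, obj X r n) :
  (forall r, st r = Dst -> E r k = F r k) ->
  (forall r, st r <> Zst -> E r k.+1 = F r k.+1) -> agree_on k.+1 st E F.
Proof. by move=> lo hi r n /sdim_live [[str ->]|[strZ ->]]; auto. Qed.

Lemma cellmap_is_hom k st X (E : forall r n, obj X r n) :
  is_pcc X -> monotone_stage st -> is_cell_family k st E -> is_hom (cellmap k.+1 st E).
Proof.
move=> pX mono [dif_lo dif_hi trm_lo trm_hi]; split; [exact: linear_cellmap | split].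
- move=> r n w; rewrite /cellmap difZ // rowsum_mpcc_dif.
  have := rowsum_dim0 w; move: (rowsum w) => a a0.
  have [d0|/sdim_live [[str ->]|[strZ ->]]] := eqVneq (sdim k.+1 (st r) n) 0%N.
  + by rewrite a0 // scale0r; case: (st r); rewrite ?mul0rn scale0r.
  + by rewrite str sdim_hi // mulr1n dif_lo.
  + rewrite sdim_top; case str: (st r) strZ => // _; rewrite ?mulr0n scale0r.
      by rewrite dif_hi ?scaler0.
    by rewrite -dif_lo // difK ?scaler0.
- move=> r r' n w le_rr'; rewrite /cellmap /= trmZ // rowsum_mulmx_const1.
  have := rowsum_dim0 w; move: (rowsum w) => a a0.
  have [d0|/sdim_live [[str ->]|[strZ ->]]] := eqVneq (sdim k.+1 (st r) n) 0%N.
  + by rewrite a0 // mul0rn !scale0r.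
  + by rewrite (monotone_Dst mono le_rr' str) sdim_Dlo mulr1n trm_lo.
  + rewrite sdim_hi ?mulr1n ?trm_hi //; exact: monotone_nZst mono le_rr' strZ.
Qed.

Lemma cells_of_is_family k st X (f : Defs.hom (mpcc k.+1 st) X) :
  monotone_stage st -> is_hom f -> is_cell_family k st (cells_of f).
Proof.
move=> mono [lin_f [f_dif f_trm]]; split.
- move=> r str; rewrite {1}/cells_of f_dif linear_cellsE // rowsum_mpcc_dif.
  by rewrite rowsum_const str sdim_Dlo sdim_hi // !mulr1n scale1r.
- move=> r str; rewrite {1}/cells_of f_dif linear_cellsE // rowsum_mpcc_dif.
  by rewrite str scale0r.
- move=> r r' le_rr' str; rewrite {1}/cells_of f_trm // linear_cellsE //=.
  rewrite rowsum_mulmx_const1 rowsum_const str (monotone_Dst mono le_rr' str).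
  by rewrite sdim_Dlo !mulr1n scale1r.
- move=> r r' le_rr' strZ; rewrite {1}/cells_of f_trm // linear_cellsE //=.
  rewrite rowsum_mulmx_const1 rowsum_const (sdim_hi _ strZ).
  by rewrite (sdim_hi _ (monotone_nZst mono le_rr' strZ)) !mulr1n scale1r.
Qed.

End CellFamilies.

Section Lifting.
Variables (R : realType) (X Y : pcc R) (p : Defs.hom X Y).
Hypotheses (pX : is_pcc X) (pY : is_pcc Y) (p_hom : is_hom p).

Lemma lift_cells k (st1 st2 : Rnn R -> stage) :
  monotone_stage st1 -> monotone_stage st2 ->
  (forall r, stage_rank (st1 r) <= stage_rank (st2 r))%N ->
  LLP (@mhom R k.+1 st1 st2) p ->
  forall (E : forall r n, obj X r n) (V : forall r n, obj Y r n),
  is_cell_family k st1 E -> is_cell_family k st2 V -> agree_on k.+1 st1 (hmap p E) V ->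
  exists H : forall r n, obj X r n,
    [/\ is_cell_family k st2 H, agree_on k.+1 st1 H E & agree_on k.+1 st2 (hmap p H) V].
Proof.
move=> mono1 mono2 le12 lift E V famE famV pEV.
have sub r n : (sdim k.+1 (st1 r) n <= sdim k.+1 (st2 r) n)%N by exact: sdim_rank.
have lin_p := is_hom_linear p_hom.
have lin_i := linear_mhom (k := k.+1) (st1 := st1) st2.
have square : heq (hcomp p (cellmap k.+1 st1 E)) (hcomp (cellmap k.+1 st2 V) (mhom st2)).
  apply/heq_cellsP; first exact: linear_hcomp (linear_cellmap _).
    exact: linear_hcomp (linear_cellmap _) lin_i.
  apply: agree_on_trans (agree_on_hmap p (cells_of_cellmap E)) _.
  apply: agree_on_trans pEV _; apply: agree_on_sym.
  apply: agree_on_trans (cells_of_hcomp_mhom (linear_cellmap _)) _.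
  exact: agree_on_sub sub (cells_of_cellmap V).
have [h [h_hom [hi hp]]] :=
  lift _ _ (cellmap_is_hom pX mono1 famE) (cellmap_is_hom pY mono2 famV) square.
have lin_h := is_hom_linear h_hom.
exists (cells_of h); split; first exact: cells_of_is_family.
- apply: agree_on_trans (agree_on_sym (cells_of_hcomp_mhom lin_h)) _.
  apply: agree_on_trans _ (cells_of_cellmap E).
  by apply/(heq_cellsP (linear_hcomp lin_h lin_i) (linear_cellmap _)).
- apply: agree_on_trans _ (cells_of_cellmap V).
  by apply/(heq_cellsP (linear_hcomp lin_p lin_h) (linear_cellmap _)).
Qed.

(* [sph] is the stage function of S_[s,t) or S_[s,oo), and [src] that of the source D_t,
   resp. 0, of the J-map: a disk exactly where the sphere has become one. *)
Section SphereAttachment.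
Variables (k : nat) (s : R) (sph src : Rnn R -> stage).
Hypotheses (mono_sph : monotone_stage sph) (sph_Zst : forall r, sph r = Zst <-> val r < s).
Hypothesis srcE : forall r, src r = if sph r is Dst then Dst else Zst.

Lemma st_D_of_sph r : sph r <> Zst -> st_D s r = Dst.
Proof. by rewrite /st_D sph_Zst => /negP/negbTE ->. Qed.

Lemma src_Dst r : sph r = Dst -> src r = Dst.
Proof. by rewrite srcE => ->. Qed.

Lemma sph_of_src r : src r <> Zst -> sph r = Dst.
Proof. by rewrite srcE; case: (sph r). Qed.

Lemma monotone_src : monotone_stage src.
Proof.
move=> r r' le_rr'; rewrite !srcE.
by case str: (sph r) => //; rewrite (monotone_Dst mono_sph le_rr' str).
Qed.

Lemma rank_sph_D r : (stage_rank (sph r) <= stage_rank (st_D s r))%N.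
Proof. by case str: (sph r); rewrite // st_D_of_sph ?str. Qed.

Lemma sdim_src_sph r n : (sdim k.+1 (src r) n <= sdim k.+1 (sph r) n)%N.
Proof. by apply: sdim_rank; rewrite srcE; case: (sph r). Qed.

Hypothesis lift_hi : LLP (@mhom R k.+2 sph (st_D s)) p.

Lemma lift_cocycle (u : Defs.hom (mpcc k.+1 src) X) (v : Defs.hom (mpcc k.+1 (st_D s)) Y) :
  is_hom u -> is_hom v -> agree_on k.+1 src (hmap p (cells_of u)) (cells_of v) ->
  exists x : forall r n, obj X r n,
  [/\ forall r, sph r <> Zst -> dif (x r k.+1) = 0,
      forall r r', val r <= val r' -> sph r <> Zst -> trm r' (x r k.+1) = x r' k.+1,
      forall r, sph r <> Zst -> hmap p x r k.+1 = cells_of v r k.+1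
    & forall r, sph r = Dst -> x r k.+1 = cells_of u r k.+1].
Proof.
move=> u_hom v_hom pUV.
have [dU_lo _ _ tU_hi] := cells_of_is_family monotone_src u_hom.
have [dV_lo _ _ tV_hi] := cells_of_is_family (monotone_st_D s) v_hom.
set U := cells_of u in pUV dU_lo tU_hi *; set V := cells_of v in pUV dV_lo tV_hi *.
have U_top r : U r k.+2 = 0 := cells_of_dead (is_hom_linear u_hom) (sdim_top _ _).
have V_top r : V r k.+2 = 0 := cells_of_dead (is_hom_linear v_hom) (sdim_top _ _).
(* Seen one dimension up, the top cells of u and v are bottom cells of D^(k+2). *)
pose E r n : obj X r n := if sph r is Dst then U r n else 0.
have E_top r : E r k.+2 = 0 by rewrite /E; case: (sph r).
have famE : is_cell_family k.+1 sph E.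
  split=> [r str | r str | r r' le_rr' str | r r' le_rr' _]; rewrite ?E_top /E.
  - by rewrite str -dU_lo ?difK ?src_Dst.
  - by rewrite dif0.
  - by rewrite str (monotone_Dst mono_sph le_rr' str) tU_hi ?src_Dst.
  - by rewrite trm0.
have famV : is_cell_family k.+1 (st_D s) V.
  split=> [r Dr | r /st_D_nSst // | r r' le_rr' Dr | r r' le_rr' _].
  - by rewrite V_top -dV_lo // difK.
  - by rewrite tV_hi // Dr.
  - by rewrite !V_top trm0.
have pEV : agree_on k.+2 sph (hmap p E) V.
  apply: agree_on_cells => [r str | r _].
    by rewrite /hmap /E str; apply: pUV; rewrite src_Dst // sdim_hi.
  by rewrite /hmap E_top V_top is_hom0.
have [x [[dx_lo _ tx_lo _] xE pxV]] :=
  lift_cells mono_sph (monotone_st_D s) rank_sph_D lift_hi famE famV pEV.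
exists x; split=> [r nZ | r r' le_rr' nZ | r nZ | r str].
- by rewrite dx_lo ?st_D_of_sph // xE ?E_top // sdim_hi.
- by rewrite tx_lo ?st_D_of_sph.
- by rewrite pxV ?st_D_of_sph // sdim_Dlo.
- by rewrite xE /E ?str // sdim_Dlo.
Qed.

Hypothesis lift_lo : LLP (@mhom R k.+1 sph (st_D s)) p.

Lemma extend_cells (u : Defs.hom (mpcc k.+1 src) X) (v : Defs.hom (mpcc k.+1 (st_D s)) Y) :
  is_hom u -> is_hom v -> agree_on k.+1 src (hmap p (cells_of u)) (cells_of v) ->
  exists E : forall r n, obj X r n,
  [/\ is_cell_family k sph E, agree_on k.+1 src E (cells_of u)
    & agree_on k.+1 sph (hmap p E) (cells_of v)].
Proof.
move=> u_hom v_hom pUV.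
have [x [dx tx pxV xU]] := lift_cocycle u_hom v_hom pUV.
have [dU_lo _ tU_lo _] := cells_of_is_family monotone_src u_hom.
set U := cells_of u in pUV xU dU_lo tU_lo *.
pose E r n : obj X r n := if sph r is Dst then U r n else x r n.
have E_hi r : sph r <> Zst -> E r k.+1 = x r k.+1.
  by rewrite /E; case str: (sph r) => // _; rewrite xU.
exists E; split.
- split=> [r str | r str | r r' le_rr' str | r r' le_rr' nZ].
  + by rewrite /E str dU_lo ?src_Dst.
  + by rewrite E_hi ?dx ?str.
  + by rewrite /E str (monotone_Dst mono_sph le_rr' str) tU_lo ?src_Dst.
  + by rewrite !E_hi ?tx //; exact: monotone_nZst mono_sph le_rr' nZ.
- apply: agree_on_cells => r srcr; rewrite /E sph_of_src // => strZ.
  by move: srcr; rewrite strZ.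
- apply: agree_on_cells => [r str | r nZ].
    by rewrite /hmap /E str; apply: pUV; rewrite src_Dst // sdim_Dlo.
  by rewrite /hmap E_hi //; exact: pxV.
Qed.

Lemma sdim_src_D r n : (sdim k.+1 (src r) n <= sdim k.+1 (st_D s r) n)%N.
Proof. exact: leq_trans (sdim_src_sph r n) (sdim_rank k n (rank_sph_D r)). Qed.

Lemma LLP_sphere_attachment : LLP (@mhom R k.+1 src (st_D s)) p.
Proof.
move=> u v u_hom v_hom square.
have lin_p := is_hom_linear p_hom; have lin_u := is_hom_linear u_hom.
have lin_v := is_hom_linear v_hom.
have lin_i := linear_mhom (k := k.+1) (st1 := src) (st_D s).
have pUV : agree_on k.+1 src (hmap p (cells_of u)) (cells_of v).
  apply: agree_on_trans _ (cells_of_hcomp_mhom lin_v).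
  exact/(heq_cellsP (linear_hcomp lin_p lin_u) (linear_hcomp lin_v lin_i)).
have [E [famE EU pEV]] := extend_cells u_hom v_hom pUV.
have [H [famH HE pHV]] := lift_cells mono_sph (monotone_st_D s) rank_sph_D lift_lo famE
  (cells_of_is_family (monotone_st_D s) v_hom) pEV.
have lin_h := linear_cellmap (k := k.+1) (st := st_D s) H.
exists (cellmap k.+1 (st_D s) H); split; first exact: cellmap_is_hom pX (monotone_st_D s) famH.
split.
- apply/(heq_cellsP (linear_hcomp lin_h lin_i) lin_u).
  apply: agree_on_trans (cells_of_hcomp_mhom lin_h) _.
  apply: agree_on_trans (agree_on_sub sdim_src_D (cells_of_cellmap H)) _.
  exact: agree_on_trans (agree_on_sub sdim_src_sph HE) EU.
- apply/(heq_cellsP (linear_hcomp lin_p lin_h) lin_v).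
  exact: agree_on_trans (agree_on_hmap p (cells_of_cellmap H)) pHV.
Qed.

End SphereAttachment.

Lemma LLP_mhom_dim0 k (st1 st2 : Rnn R -> stage) :
  (forall r n, sdim k (st1 r) n = 0%N) -> (forall r n, sdim k (st2 r) n = 0%N) ->
  LLP (@mhom R k st1 st2) p.
Proof.
move=> dead1 dead2 u v u_hom v_hom _.
pose h : Defs.hom (mpcc k st2) X := fun r n _ => 0.
have h_hom : is_hom h.
  split; [by move=> r n a x y; rewrite scaler0 addr0 | split=> [r n x | r r' n x le_rr'] /=].
    exact: dif0.
  exact: trm0.
exists h; split => //; split.
  by move=> r n w; rewrite /hcomp /h (row_dim0 w (dead1 r n)) is_hom0.
by move=> r n w; rewrite /hcomp /h (row_dim0 w (dead2 r n)) !is_hom0.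
Qed.

End Lifting.

Section Acyclicity.
Variable R : realType.

Lemma mpcc_coboundary0 k st (r : Rnn R) n : coboundary (0 : obj (mpcc k st) r n).
Proof. by case: n => [|n] //; exists 0; rewrite /= mul0mx. Qed.

Lemma mpcc_coboundaryN k st (r : Rnn R) n (x : obj (mpcc k st) r n) :
  coboundary x -> coboundary (- x).
Proof.
by case: n x => [|n] x /= => [-> | [y <-]]; [rewrite oppr0 | exists (- y); rewrite mulNmx].
Qed.

Lemma mpcc_acyclic k st (r : Rnn R) n (x : obj (mpcc k st) r n) :
  st r <> Sst -> cocycle x -> coboundary x.
Proof.
move=> nS cx; case: k => [|k] in x cx *.
  by rewrite (row_dim0 x); [exact: mpcc_coboundary0 | case: (st r) nS].
have x_le1E := row_le1E x (sdim_le1 _ _ _).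
have := congr1 (@rowsum _) cx; rewrite rowsum_mpcc_dif rowsum0.
have [d0 | /sdim_live [[str n_k] | [nZ n_k1]]] := eqVneq (sdim k.+1 (st r) n) 0%N.
- by rewrite (row_dim0 x d0) => _; exact: mpcc_coboundary0.
- subst n => cx0; have x0 : rowsum x = 0.
    by move: (rowsum x) cx0 => a; rewrite str sdim_hi // mulr1n.
  by rewrite x_le1E x0 scale0r; exact: mpcc_coboundary0.
- subst n => _; have str : st r = Dst by case: (st r) nS nZ.
  exists (rowsum x *: const_mx 1); apply: row_le1_inj (sdim_le1 _ _ _) _.
  rewrite rowsum_mpcc_dif rowsumZ rowsum_const; move: (rowsum x) => a.
  by rewrite str sdim_Dlo sdim_hi // mulr1 mulr1n.
Qed.

Lemma quasi_iso_mhom k (st1 st2 : Rnn R -> stage) r :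
  st1 r <> Sst -> st2 r <> Sst -> quasi_iso_at (@mhom R k st1 st2) r.
Proof.
move=> nS1 nS2 n; split=> [x cx _ | y cy]; first exact: mpcc_acyclic.
exists 0; split; first by rewrite /cocycle /= mul0mx.
by rewrite /mhom mul0mx sub0r; apply/mpcc_coboundaryN/mpcc_acyclic.
Qed.

End Acyclicity.

Theorem mainTheorem10 (R : realType) :
  (forall (k : nat) (s t : R), 0 <= s -> s < t ->
      I_cof (@J_D R k s t) /\ inW (@J_D R k s t)) /\
  (forall (k : nat) (s : R), 0 <= s ->
      I_cof (@J_0 R k s) /\ inW (@J_0 R k s)).
Proof.
split=> [k s t s_ge0 lt_st | k s s_ge0]; split=> [X Y p pX pY p_hom [lift_fin lift_inf] | r].
- case: k => [|k].
    by apply: LLP_mhom_dim0 => // r n; apply/sdim0_nSst/st_D_nSst.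
  apply: (LLP_sphere_attachment pX pY p_hom (monotone_st_Sint s t) (st_Sint_Zst s t));
    [by move=> r; apply: st_D_Sint | exact: lift_fin ..].
- by apply: quasi_iso_mhom; apply: st_D_nSst.
- case: k => [|k].
    by apply: LLP_mhom_dim0 => // r n; apply/sdim0_nSst/st_D_nSst.
  apply: (LLP_sphere_attachment pX pY p_hom (monotone_st_Sinf s) (st_Sinf_Zst s));
    [by move=> r; rewrite /st_Sinf; case: ifP | exact: lift_inf ..].
- by apply: quasi_iso_mhom; last exact: st_D_nSst.
Qed.
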